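(* Let $H$ be a finite simple connected graph such that $\mathscr{C}(H)$ is an accessible set system. Let $n,\ell$ be integers with $n\geq 2$ and $1\leq \ell<n$, and let $G:=K_n\circ_\ell H$. Then $\mathscr{C}(G)$ is an accessible set system.
   Context: For a graph $\Gamma$ and $A\subseteq V(\Gamma)$, $\omega(\Gamma\setminus A)$ is the number of connected components of the induced subgraph on $V(\Gamma)\setminus A$. A subset $T\subseteq V(\Gamma)$ is a cutset if $T=\emptyset$ or, for every $v\in T$, $\omega(\Gamma\setminus (T\setminus\{v\}))<\omega(\Gamma\setminus T)$; $\mathscr{C}(\Gamma)$ is the set of cutsets. $\mathscr{C}(\Gamma)$ is an accessible set system if for every non-empty $T\in\mathscr{C}(\Gamma)$ there is $t\in T$ with $T\setminus\{t\}\in\mathscr{C}(\Gamma)$. $K_n$ is the complete graph on $n$ vertices. For a subset $L\subseteq V(K_n)$ with $|L|=\ell$, $K_n\circ_\ell H$ denotes the graph obtained from $K_n$ by taking, for each $v\in L$, a disjoint copy $H_v$ of $H$ and joining $v$ to every vertex of $H_v$ (up to isomorphism this does not depend on the choice of $L$). *)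

From mathcomp Require Import all_boot.
Set Implicit Arguments. Unset Strict Implicit. Unset Printing Implicit Defensive.

Definition simple_graph (V : finType) (e : rel V) : Prop :=
  symmetric e /\ irreflexive e.

Definition induced_rel (V : finType) (e : rel V) (S : {set V}) : rel V :=
  fun x y => [&& x \in S, y \in S & e x y].

Definition ncomp (V : finType) (e : rel V) (S : {set V}) : nat :=
  #|[set [set y in S | connect (induced_rel e S) x y] | x in S]|.

Definition omega (V : finType) (e : rel V) (A : {set V}) : nat :=
  ncomp e (~: A).

Definition connected_graph (V : finType) (e : rel V) : Prop :=
  omega e set0 = 1.

Definition is_cutset (V : finType) (e : rel V) (T : {set V}) : Prop :=
  T = set0 \/ (forall v, v \in T -> omega e (T :\ v) < omega e T).

Definition accessible_cutsets (V : finType) (e : rel V) : Prop :=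
  forall T : {set V}, is_cutset e T -> T != set0 ->
    exists2 t, t \in T & is_cutset e (T :\ t).

(* K_n o_L H : vertices are those of K_n (left) plus, for each v in L,
   a copy of H (pairs (v, h) with v \in L). *)
Definition corona_V (n : nat) (L : {set 'I_n}) (W : finType) : finType :=
  ('I_n + {p : 'I_n * W | p.1 \in L})%type.

Definition corona_rel (n : nat) (L : {set 'I_n}) (W : finType) (eH : rel W)
  : rel (corona_V L W) :=
  fun x y =>
    match x, y with
    | inl i, inl j => i != j
    | inl i, inr q => i == (val q).1
    | inr p, inl j => (val p).1 == j
    | inr p, inr q => ((val p).1 == (val q).1) && eH (val p).2 (val q).2
    end.
Arguments corona_rel {n} L {W} eH.

From mathcomp Require Import all_boot.
Set Implicit Arguments. Unset Strict Implicit. Unset Printing Implicit Defensive.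

(* A set T is a cutset iff every v in T is adjacent to two distinct components
   of the graph minus T: adding v back to the complement of T merges components
   exactly then.  In K_n o_L H there is a clique vertex j0 outside L (as l < n),
   and it is never in a cutset.  Using it, a set T is a cutset iff
   - every hub k in T (a clique vertex carrying a copy H_k) keeps some vertex
     of H_k outside T, and
   - every vertex (k, w) in T has its hub k in T and w joins two components of
     H minus the fiber T /\ H_k;
   in particular every nonempty fiber is a cutset of H.  Both conditions survive
   removing from a nonempty fiber the vertex given by accessibility of H, and if
   T contains hubs only, the removal of any vertex. *)

Lemma connect_invariant (T : finType) (e : rel T) (P : pred T) x y :
  (forall z w, e z w -> P z -> P w) -> connect e x y -> P x -> P y.
Proof.
move=> inv /connectP[p + ->]; elim: p x => [|z p IHp] x //= /andP[exz pz] Px.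
exact: IHp pz (inv _ _ exz Px).
Qed.

Lemma connect_homo (T T' : finType) (e : rel T) (e' : rel T') (f : T -> T') x y :
  (forall z w, e z w -> e' (f z) (f w)) -> connect e x y -> connect e' (f x) (f y).
Proof.
move=> hom cxy.
apply: (connect_invariant (P := fun z => connect e' (f x) (f z))) cxy _ => //.
by move=> z w ezw cz; apply: connect_trans cz (connect1 (hom _ _ ezw)).
Qed.

Definition joins_components (V : finType) (e : rel V) (U : {set V}) (v : V) : bool :=
  [exists a in U, exists b in U, [&& e v a, e v b & ~~ connect (induced_rel e U) a b]].

Section Components.
Variables (V : finType) (e : rel V).
Hypothesis e_sym : symmetric e.
Implicit Types (S U T : {set V}) (v x y : V).

Lemma induced_rel_sym S : symmetric (induced_rel e S).
Proof. by move=> x y; rewrite /induced_rel e_sym andbCA. Qed.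

Lemma connect_induced_sym S : connect_sym (induced_rel e S).
Proof. exact/sym_connect_sym/induced_rel_sym. Qed.

Lemma connect_induced_subset S S' x y : S \subset S' ->
  connect (induced_rel e S) x y -> connect (induced_rel e S') x y.
Proof.
move=> sSS'; apply: connect_homo => z w /and3P[zS wS ezw].
by rewrite /induced_rel (subsetP sSS' _ zS) (subsetP sSS' _ wS).
Qed.

Definition component S x := [set y in S | connect (induced_rel e S) x y].

Lemma connect_component_eq S x y :
  connect (induced_rel e S) x y -> component S x = component S y.
Proof.
move=> cxy; apply/setP => z; rewrite !inE; congr (_ && _).
by rewrite (same_connect (connect_induced_sym S) cxy).
Qed.

Lemma component_eq_connect S x y : y \in S ->
  component S x = component S y -> connect (induced_rel e S) x y.
Proof.
by move=> yS exy; have /setP/(_ y) := exy; rewrite !inE yS connect0 => /andP[].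
Qed.

Section AddVertex.
Variables (U : {set V}) (v : V).
Hypothesis vNU : v \notin U.
Local Notation U' := (v |: U).

Let subUU' : U \subset U'. Proof. exact: subsetUr. Qed.

Let lift_component (C : {set V}) := component U' (odflt v [pick x in C]).

Let lift_componentE x : x \in U -> lift_component (component U x) = component U' x.
Proof.
rewrite /lift_component => xU; case: pickP => [y|none] /=.
  by rewrite inE => /andP[_ /(connect_induced_subset subUU') /connect_component_eq].
by have := none x; rewrite inE xU connect0.
Qed.

Lemma connect_setU1 x y : ~~ joins_components e U v -> x \in U -> y \in U ->
  connect (induced_rel e U') x y -> connect (induced_rel e U) x y.
Proof.
move=> nojoin xU yU cxy.
have nbrs_connected a b : a \in U -> b \in U -> e v a -> e v b ->
    connect (induced_rel e U) a b.
  move=> aU bU va vb; apply: contraNT nojoin => nab.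
  by apply/existsP; exists a; rewrite aU; apply/existsP; exists b; rewrite bU va vb.
have neqv z : z \in U -> (z == v) = false by move=> zU; apply: contraNF vNU => /eqP <-.
pose P z := if z == v then [exists a in U, e v a && connect (induced_rel e U) x a]
            else connect (induced_rel e U) x z.
suff : P y by rewrite /P neqv.
apply: (connect_invariant (P := P)) cxy _; last by rewrite /P neqv.
move=> z w /and3P[zU' wU' ezw]; rewrite /P.
have inU u : u \in U' -> u != v -> u \in U by rewrite !inE => /orP[/eqP-> /eqP|].
case: (eqVneq w v) => [ewv | /(inU _ wU') wU].
  case: (eqVneq z v) => [// | /(inU _ zU') zU cxz].
  by apply/existsP; exists z; rewrite zU e_sym -ewv ezw.
case: (eqVneq z v) => [ezv | /(inU _ zU') zU cxz].
  case/existsP => a /and3P[aU va cxa]; apply: connect_trans cxa (nbrs_connected a w aU wU va _).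
  by rewrite -ezv.
by apply: connect_trans cxz (connect1 _); rewrite /induced_rel zU wU.
Qed.

Lemma ncomp_setU1_nojoin : ~~ joins_components e U v -> ncomp e U <= ncomp e U'.
Proof.
move=> nojoin; rewrite /ncomp -!/(component _).
have lift_inj : {in component U @: U &, injective lift_component}.
  move=> _ _ /imsetP[x xU ->] /imsetP[y yU ->]; rewrite !lift_componentE // => exy.
  apply: connect_component_eq; apply: connect_setU1 => //.
  by apply: component_eq_connect exy; rewrite !inE yU orbT.
rewrite -(card_in_imset lift_inj); apply/subset_leq_card/subsetP.
move=> _ /imsetP[_ /imsetP[x xU ->] ->]; rewrite lift_componentE //.
by apply/imsetP; exists x; rewrite // !inE xU orbT.
Qed.

Lemma ncomp_setU1_join : joins_components e U v -> ncomp e U' < ncomp e U.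
Proof.
case/existsP => a /andP[aU /existsP[b /andP[bU /and3P[va vb nab]]]].
rewrite /ncomp -!/(component _).
have vU' : v \in U' by rewrite !inE eqxx.
have edge_v u : u \in U -> e v u -> induced_rel e U' v u.
  by move=> uU vu; rewrite /induced_rel vU' vu !inE uU orbT.
have component_va : component U' v = component U' a.
  by apply/connect_component_eq/connect1/edge_v.
have sub_lift : component U' @: U' \subset lift_component @: (component U @: U).
  apply/subsetP => _ /imsetP[x xU' ->].
  have [-> | /negPf nxv] := eqVneq x v.
    by rewrite component_va -lift_componentE //; apply/imset_f/imset_f.
  move: xU'; rewrite !inE nxv => xU.
  by rewrite -lift_componentE //; apply/imset_f/imset_f.
apply: leq_ltn_trans (subset_leq_card sub_lift) _.
rewrite ltn_neqAle leq_imset_card andbT; apply: contra nab => /imset_injP lift_inj.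
apply/component_eq_connect/lift_inj; rewrite ?imset_f // !lift_componentE //.
by rewrite -component_va; apply/connect_component_eq/connect1/edge_v.
Qed.

Lemma ncomp_setU1 : (ncomp e U' < ncomp e U) = joins_components e U v.
Proof.
apply/idP/idP => [|/ncomp_setU1_join //].
by apply: contraLR => /ncomp_setU1_nojoin; rewrite -leqNgt.
Qed.

End AddVertex.

Lemma omega_setD1 T v : v \in T ->
  (omega e (T :\ v) < omega e T) = joins_components e (~: T) v.
Proof. by move=> vT; rewrite /omega setCD setUC ncomp_setU1 // inE negbK. Qed.

Lemma cutsetP T : is_cutset e T <-> {in T, forall v, joins_components e (~: T) v}.
Proof.
split => [[-> v | cutT v vT] | joinT]; first by rewrite inE.
  by rewrite -omega_setD1 ?cutT.
by right => v vT; rewrite omega_setD1 ?joinT.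
Qed.

End Components.

Section Corona.
Variables (n : nat) (L : {set 'I_n}) (W : finType) (eH : rel W).
Hypothesis eH_sym : symmetric eH.
Local Notation V := (corona_V L W).
Local Notation eG := (corona_rel L eH).
Local Notation copy_vertex := {p : 'I_n * W | p.1 \in L}.
Implicit Types (T : {set V}) (q : copy_vertex).

Lemma corona_rel_sym : symmetric eG.
Proof. by move=> [i|p] [j|r] //=; rewrite eq_sym // eH_sym. Qed.

Definition copyv q (w : W) : V := inr (exist _ ((val q).1, w) (valP q)).

Definition fiber T q : {set W} := [set w | copyv q w \in T].

Lemma copyv_self q : copyv q (val q).2 = inr q.
Proof. by congr inr; apply: val_inj; rewrite /= -surjective_pairing. Qed.

Lemma in_fiber T q : ((val q).2 \in fiber T q) = (inr q \in T).
Proof. by rewrite inE copyv_self. Qed.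

Lemma copyv_eq q q' w w' :
  (copyv q w == copyv q' w') = ((val q).1 == (val q').1) && (w == w').
Proof.
apply/eqP/andP => [[-> ->] // | [/eqP eqi /eqP ->]].
by congr inr; apply: val_inj; rewrite /= eqi.
Qed.

Lemma fiber_eq T q q' : (val q).1 = (val q').1 -> fiber T q = fiber T q'.
Proof.
move=> eqi; apply/setP => w; rewrite !inE; congr (_ \in T).
by apply/eqP; rewrite copyv_eq eqi !eqxx.
Qed.

Lemma fiber_setD1 T q q' t :
  fiber (T :\ copyv q t) q' = if (val q').1 == (val q).1 then fiber T q' :\ t else fiber T q'.
Proof.
by apply/setP => w; rewrite !inE copyv_eq; case: eqP; rewrite ?inE.
Qed.

Lemma corona_rel_copy q w c :
  eG (copyv q w) c -> c = inl (val q).1 \/ exists2 w', c = copyv q w' & eH w w'.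
Proof.
case: c => [j /eqP <-| [[i w'] hi] /andP[/eqP /= eqi ww']]; first by left.
by right; exists w' => //; congr inr; apply: val_inj; rewrite /= eqi.
Qed.

Lemma connect_copy_lift T q a b :
  connect (induced_rel eH (~: fiber T q)) a b ->
  connect (induced_rel eG (~: T)) (copyv q a) (copyv q b).
Proof.
apply: connect_homo => z w /and3P[zT wT zw].
by move: zT wT; rewrite /induced_rel !inE => -> ->; rewrite /= eqxx.
Qed.

Lemma connect_in_copy T q a z : inl (val q).1 \in T ->
  connect (induced_rel eG (~: T)) (copyv q a) z ->
  exists2 w, z = copyv q w & connect (induced_rel eH (~: fiber T q)) a w.
Proof.
move=> hubT cqz.
pose P c := [exists w, (c == copyv q w) && connect (induced_rel eH (~: fiber T q)) a w].
suff /existsP[w /andP[/eqP -> cw]] : P z by exists w.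
apply: (connect_invariant (P := P)) cqz _; last first.
  by apply/existsP; exists a; rewrite eqxx /=.
move=> d c /and3P[wT cT ewc] /existsP[w /andP[/eqP eqd cw]]; subst d.
have [ci | [w' eqc ww']] := corona_rel_copy ewc; first by rewrite ci inE hubT in cT.
apply/existsP; exists w'; rewrite eqc eqxx /=; apply: connect_trans cw (connect1 _).
rewrite eqc inE in cT; rewrite inE in wT.
by rewrite /induced_rel !inE wT cT ww'.
Qed.

Lemma connect_copy_proj T q a b : inl (val q).1 \in T ->
  connect (induced_rel eG (~: T)) (copyv q a) (copyv q b) ->
  connect (induced_rel eH (~: fiber T q)) a b.
Proof.
move=> hubT /(connect_in_copy hubT)[w /eqP].
by rewrite copyv_eq eqxx => /eqP ->.
Qed.

Lemma joins_copy T q :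
  joins_components eG (~: T) (inr q) =
  (inl (val q).1 \in T) && joins_components eH (~: fiber T q) (val q).2.
Proof.
rewrite -copyv_self; have [hubT | hubNT] /= := boolP (inl (val q).1 \in T); last first.
  have hub_conn c : c \in ~: T -> eG (copyv q (val q).2) c ->
      connect (induced_rel eG (~: T)) (inl (val q).1) c.
    move=> cT /corona_rel_copy[eqc | [w eqc _]]; subst c => //.
    by apply: connect1; rewrite /induced_rel cT inE hubNT /= eqxx.
  apply/negbTE/negP => /existsP[a /andP[aT /existsP[b /andP[bT /and3P[qa qb]]]]].
  apply/negP/negPn/(connect_trans _ (hub_conn b bT qb)).
  by rewrite (connect_induced_sym corona_rel_sym) hub_conn.
apply/existsP/existsP => [[a /andP[aT /existsP[b /andP[bT /and3P[qa qb nab]]]]] |].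
  have [ai | [wa eqa qwa]] := corona_rel_copy qa; first by rewrite ai inE hubT in aT.
  have [bi | [wb eqb qwb]] := corona_rel_copy qb; first by rewrite bi inE hubT in bT.
  subst a b; rewrite inE in aT; rewrite inE in bT.
  exists wa; rewrite !inE aT /=.
  apply/existsP; exists wb; rewrite !inE bT qwa qwb /=.
  by apply: contra nab; apply: connect_copy_lift.
move=> [wa /andP[waT /existsP[wb /andP[wbT /and3P[qwa qwb nab]]]]].
exists (copyv q wa); rewrite !inE in waT wbT; rewrite inE waT /=.
apply/existsP; exists (copyv q wb); rewrite inE wbT /= !eqxx qwa qwb /=.
by apply: contra nab; apply: connect_copy_proj.
Qed.

Lemma joins_hub T k :
  joins_components eG (~: T) (inl k) -> [exists q, ((val q).1 == k) && (inr q \notin T)].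
Proof.
case/existsP => a /andP[aT /existsP[b /andP[bT /and3P[ka kb nab]]]].
apply: contraNT nab => noq.
have hub_nbr c : c \in ~: T -> eG (inl k) c -> exists j, c = inl j.
  case: c => [j | q] cT /= kc; first by exists j.
  by case/negP: noq; apply/existsP; exists q; rewrite inE in cT; rewrite eq_sym kc cT.
have [ja eqa] := hub_nbr a aT ka; have [jb eqb] := hub_nbr b bT kb; subst a b.
have [<- // | njab] := eqVneq ja jb.
by apply: connect1; rewrite /induced_rel aT bT.
Qed.

Lemma joins_hub_of T k j q : inl k \in T -> j \notin L -> inl j \notin T ->
  (val q).1 = k -> inr q \notin T -> joins_components eG (~: T) (inl k).
Proof.
move=> kT jL jT eqk qT; subst k; apply/existsP; exists (inl j); rewrite inE jT /=.
apply/existsP; exists (inr q); rewrite inE qT /= eqxx /=.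
apply/andP; split; first by apply/eqP => eqj; rewrite -eqj (valP q) in jL.
rewrite (connect_induced_sym corona_rel_sym) -copyv_self.
by apply/negP => /(connect_in_copy kT)[].
Qed.

Definition hub_condition T :=
  forall k, inl k \in T -> [exists q, ((val q).1 == k) && (inr q \notin T)].

Definition copy_condition T :=
  forall q, inr q \in T -> inl (val q).1 \in T /\ joins_components eH (~: fiber T q) (val q).2.

Lemma corona_cutsetP T j0 : j0 \notin L ->
  is_cutset eG T <-> hub_condition T /\ copy_condition T.
Proof.
move=> j0L; split => [/(cutsetP corona_rel_sym) joinT | [hubT copyT]].
- split=> [k kT | q qT]; first exact/joins_hub/joinT.
  by apply/andP; rewrite -joins_copy joinT.
apply/(cutsetP corona_rel_sym) => -[k | q] vT.
- have /existsP[q /andP[/eqP qk qT]] := hubT k vT.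
  apply: (joins_hub_of vT j0L _ qk qT).
  by apply/negP => /hubT /existsP[q' /andP[/eqP eqj0 _]]; rewrite -eqj0 (valP q') in j0L.
- by rewrite joins_copy; apply/andP; apply: copyT.
Qed.

Lemma hub_condition_subset T T' : T' \subset T -> hub_condition T -> hub_condition T'.
Proof.
move=> sT'T hubT k /(subsetP sT'T)/hubT/existsP[q /andP[qk qT]].
by apply/existsP; exists q; rewrite qk; apply: contra qT; apply: (subsetP sT'T).
Qed.

Lemma fiber_cutset T q : copy_condition T -> inr q \in T -> is_cutset eH (fiber T q).
Proof.
move=> copyT qT; apply/(cutsetP eH_sym) => w; rewrite inE => /copyT[_].
by rewrite (@fiber_eq T _ q).
Qed.

Lemma copy_condition_setD1 T q t : copy_condition T ->
  is_cutset eH (fiber T q :\ t) -> copy_condition (T :\ copyv q t).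
Proof.
move=> copyT cutSt q' /setD1P[ne q'T]; have [hubT joinq'] := copyT q' q'T.
split; first by rewrite !inE hubT.
have : (val q').2 \in fiber (T :\ copyv q t) q' by rewrite in_fiber !inE ne q'T.
rewrite !fiber_setD1; case: eqP => [eqi | _ _]; last exact: joinq'.
by rewrite (fiber_eq T eqi); apply: (iffLR (cutsetP eH_sym _)).
Qed.

End Corona.

Theorem theorem3p10 (W : finType) (eH : rel W) (n l : nat) (L : {set 'I_n}) :
  simple_graph eH -> connected_graph eH -> accessible_cutsets eH ->
  2 <= n -> 1 <= l < n -> #|L| = l ->
  accessible_cutsets (corona_rel L eH).
Proof.
move=> [eH_sym _] _ accH _ /andP[_ lt_l_n] cardL.
have [j0 _ j0L] : exists2 j0, j0 \in [set: 'I_n] & j0 \notin L.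
  apply/subsetPn; apply: contraTN lt_l_n => /subset_leq_card.
  by rewrite cardsT card_ord cardL leqNgt.
move=> T /(corona_cutsetP eH_sym _ j0L)[hubT copyT] /set0Pn[v vT].
case: (pickP [pred q | inr q \in T]) => [q /= qT | noCopy].
  have S_ne : fiber T q != set0 by apply/set0Pn; exists (val q).2; rewrite in_fiber.
  have [t tS cutSt] := accH _ (fiber_cutset eH_sym copyT qT) S_ne.
  exists (copyv q t); first by rewrite inE in tS.
  apply/(corona_cutsetP eH_sym _ j0L); split; last exact: copy_condition_setD1.
  exact: hub_condition_subset (subsetDl _ _) hubT.
exists v => //; apply/(corona_cutsetP eH_sym _ j0L); split.
  exact: hub_condition_subset (subsetDl _ _) hubT.
by move=> q /setD1P[_ qT]; move: (noCopy q); rewrite /= qT.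
Qed.
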